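(* Let $T_1,T_2$ be equidistant trees with leaf set $X$ such that the tree topology of $T_1$ and the tree topology of $T_2$ differ by exactly one nearest neighbor interchange (NNI) move. Then every tree on the tropical line segment $\Gamma_{T_1,T_2}$ has the same tree topology as $T_1$ or as $T_2$, possibly with some branch lengths equal to $0$.
   Context: Max-plus arithmetic: $a\oplus b=\max\{a,b\}$, $a\odot b=a+b$; vectors in $\mathbb R^e$, $e=\binom{|X|}2$, coordinates indexed by pairs of leaves, considered modulo $\mathbb R\mathbf 1$. An equidistant tree is a rooted phylogenetic tree on leaf set $X$ with nonnegative edge lengths and all root-to-leaf distances equal; its ultrametric is its vector of pairwise leaf distances and determines the tree uniquely. $\Gamma_{T_1,T_2}$ is the set of trees whose ultrametrics are $a\odot u\oplus b\odot v$ ($a,b\in\mathbb R$), where $u,v$ are the ultrametrics of $T_1,T_2$. A clade is the set of leaves descending from a vertex. Two rooted tree topologies differ by one NNI move if there are pairwise disjoint nonempty leaf sets $X_1,X_2,X_3\subseteq X$ such that $X_1\cup X_2\cup X_3$ and each $X_i$ are clades in both trees, the two trees agree on the topology of each clade $X_i$ and on the topology outside the clade $X_1\cup X_2\cup X_3$, and inside the clade $X_1\cup X_2\cup X_3$ one tree has the form $((X_1,X_3),X_2)$ while the other has the form $((X_1,X_2),X_3)$ or $(X_1,(X_2,X_3))$ (i.e., the two trees group different pairs among $X_1,X_2,X_3$ into a clade). ''Same tree topology with possible $0$ branch lengths'' means the topology is that of $T_1$ or $T_2$ with some edges possibly having length zero (i.e., contracted). *)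

From HB Require Import structures.
From mathcomp Require Import all_boot all_order all_algebra.
Set Implicit Arguments. Unset Strict Implicit. Unset Printing Implicit Defensive.
Import Order.TTheory GRing.Theory Num.Theory.
Local Open Scope ring_scope.

Section Trees.
Variable X : finType.

(* A rooted tree topology on leaf set X, encoded by its set of clades
   (a hierarchy): nonempty clades, X and all singletons are clades, and
   any two clades are nested or disjoint. *)
Definition hierarchy (H : {set {set X}}) : Prop :=
  [/\ forall A, A \in H -> A != set0,
      [set: X] \in H,
      forall x : X, [set x] \in H &
      forall A B, A \in H -> B \in H ->
        [\/ A \subset B, B \subset A | [disjoint A & B]]].

Definition lca (H : {set {set X}}) (x y : X) : {set X} :=
  \bigcap_(A in H | (x \in A) && (y \in A)) A.

(* Inside the clade Y = X1 u X2 u X3, the tree has the form ((P,Q),S)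
   with P u Q the only clade strictly between the X_i and Y. *)
Definition grouped (H : {set {set X}}) (X1 X2 X3 P : {set X}) : Prop :=
  P \in H /\
  forall A, A \in H -> A \subset X1 :|: X2 :|: X3 ->
     ~~ [|| A \subset X1, A \subset X2 | A \subset X3] ->
     A = X1 :|: X2 :|: X3 \/ A = P.

Definition nni (H1 H2 : {set {set X}}) : Prop :=
  exists X1 X2 X3 : {set X},
    let Y := X1 :|: X2 :|: X3 in
    [/\ [/\ X1 != set0, X2 != set0 & X3 != set0],
        [/\ [disjoint X1 & X2], [disjoint X1 & X3] & [disjoint X2 & X3]],
        [/\ X1 \in H1 :&: H2, X2 \in H1 :&: H2, X3 \in H1 :&: H2
          & Y \in H1 :&: H2],
        (forall A : {set X}, [|| A \subset X1, A \subset X2 | A \subset X3] ->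
            (A \in H1) = (A \in H2)) /\
        (forall A : {set X}, [disjoint A & Y] || (Y \subset A) ->
            (A \in H1) = (A \in H2)) &
        ((grouped H1 X1 X2 X3 (X1 :|: X3) /\
           (grouped H2 X1 X2 X3 (X1 :|: X2) \/ grouped H2 X1 X2 X3 (X2 :|: X3)))
        \/
        (grouped H2 X1 X2 X3 (X1 :|: X3) /\
           (grouped H1 X1 X2 X3 (X1 :|: X2) \/ grouped H1 X1 X2 X3 (X2 :|: X3))))].

Variable R : realFieldType.

(* An equidistant tree: a topology together with vertex heights (distance
   from the leaves); leaves have height 0 and heights weakly increase towards
   the root, i.e. all edge lengths (height differences) are >= 0. *)
Record eqtree := EqTree {
  topo : {set {set X}};
  height : {set X} -> R;
  topo_hier : hierarchy topo;
  height_leaf : forall x : X, height [set x] = 0;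
  height_mono : forall A B, A \in topo -> B \in topo -> A \subset B ->
                  height A <= height B }.

Definition dist (T : eqtree) (x y : X) : R := 2 * height T (lca (topo T) x y).

End Trees.

From HB Require Import structures.
From mathcomp Require Import all_boot all_order all_algebra.
Set Implicit Arguments. Unset Strict Implicit. Unset Printing Implicit Defensive.
Import Order.TTheory GRing.Theory Num.Theory.
Local Open Scope ring_scope.

(* Let Y = X1 u X2 u X3 be the clade where the NNI move happens.  The two
   topologies have the same most recent common ancestors except for pairs
   whose ancestor in one of the trees is the inner clade P of Y, and there
   the ancestor in the other tree is Y itself.  Suppose a + d1 dominates
   b + d2 at Y, i.e. a + 2 h1(Y) >= b + 2 h2(Y).  Then lca_T1(x, y) is
   contained in lca_T2(x, y) or equal to Y, so max(a + d1, b + d2) does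
   not increase when (x, y) is replaced by two leaves of lca_T1(x, y).
   Such a dissimilarity is realised on the topology of T1 by taking as
   height of a clade half the largest dissimilarity between two of its
   leaves; some edges may get length 0. *)

Section Hierarchy.
Variable X : finType.
Implicit Types (H : {set {set X}}) (A : {set X}) (x y : X).

Lemma lca_min H x y A : A \in H -> x \in A -> y \in A -> lca H x y \subset A.
Proof. by move=> AH xA yA; apply: bigcap_inf; rewrite AH xA yA. Qed.

Lemma lca_meml H x y : x \in lca H x y.
Proof. by apply/bigcapP => A /and3P[]. Qed.

Lemma lca_memr H x y : y \in lca H x y.
Proof. by apply/bigcapP => A /and3P[]. Qed.

(* The clades containing x and y form a chain, so their intersection is
   the smallest one. *)
Lemma lca_in H x y : hierarchy H -> lca H x y \in H.
Proof.
case=> _ HT _ nested.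
pose P A := [&& A \in H, x \in A & y \in A].
have PT : P setT by rewrite /P HT !inE.
have [A0 /and3P[A0H xA0 yA0] A0min] := arg_minnP (fun A => #|A|) PT.
suff -> : lca H x y = A0 by [].
apply/eqP; rewrite eqEsubset lca_min //=.
apply/bigcapsP => B /and3P[BH xB yB].
have [// | BA0 | dA0B] := nested _ _ A0H BH.
  by rewrite -(geq_leqif (subset_leqif_card BA0)) A0min // /P BH xB yB.
by move: xB; rewrite (disjointFr dA0B xA0).
Qed.

Definition in_block (X1 X2 X3 A : {set X}) :=
  [|| A \subset X1, A \subset X2 | A \subset X3].

Section NNI.
Variables (H H' : {set {set X}}) (X1 X2 X3 : {set X}).
Local Notation Y := (X1 :|: X2 :|: X3).
Local Notation in_block := (in_block X1 X2 X3).
Hypotheses (hH : hierarchy H) (hH' : hierarchy H').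
Hypotheses (X1H' : X1 \in H') (X2H' : X2 \in H') (X3H' : X3 \in H').
Hypotheses (YH : Y \in H) (YH' : Y \in H').
Hypothesis agree_in : forall A, in_block A -> (A \in H) = (A \in H').
Hypothesis agree_out : forall A, [disjoint A & Y] || (Y \subset A) ->
  (A \in H) = (A \in H').

Lemma in_block_lca A x y : x \in A -> y \in A -> in_block A ->
  in_block (lca H' x y).
Proof.
move=> xA yA /or3P[] /subsetP sA; apply/or3P;
  [apply: Or31 | apply: Or32 | apply: Or33]; by apply: lca_min; rewrite ?sA.
Qed.

Lemma lca_nni P P' : grouped H X1 X2 X3 P -> grouped H' X1 X2 X3 P' ->
  in_block (P :&: P') ->
  forall x y, lca H x y \subset lca H' x y \/ lca H x y = Y.
Proof.
move=> [_ gH] [_ gH'] blockPP' x y.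
set L := lca H x y; set L' := lca H' x y.
have LH : L \in H by apply: lca_in.
have L'H' : L' \in H' by apply: lca_in.
have [xL yL] := (lca_meml H x y, lca_memr H x y).
have [xL' yL'] := (lca_meml H' x y, lca_memr H' x y).
have [blockL' | nblockL'] := boolP (in_block L').
  by left; apply: lca_min; rewrite // agree_in.
have nblockL : ~~ in_block L by apply: contra nblockL'; apply: in_block_lca.
case: hH' => _ _ _ /(_ _ _ L'H' YH') [L'Y | YL' | dL'Y]; last 2 first.
- by left; apply: lca_min; rewrite // agree_out // YL' orbT.
- by left; apply: lca_min; rewrite // agree_out // dL'Y.
have LY : L \subset Y by apply: lca_min; rewrite // (subsetP L'Y).
case: (gH L LH LY nblockL) => [-> | LP]; first by right.
case: (gH' L' L'H' L'Y nblockL') => [-> | L'P']; first by left.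
by move: nblockL'; rewrite (in_block_lca (A := P :&: P')) // inE -LP -L'P'
  ?xL ?yL.
Qed.

End NNI.

Lemma nni_lca H1 H2 : hierarchy H1 -> hierarchy H2 -> nni H1 H2 ->
  exists2 Y, Y \in H1 :&: H2 & forall x y,
    (lca H1 x y \subset lca H2 x y \/ lca H1 x y = Y) /\
    (lca H2 x y \subset lca H1 x y \/ lca H2 x y = Y).
Proof.
move=> h1 h2 [X1 [X2 [X3 /= [_ [d12 _ d23] [m1 m2 m3 mY] [agI agO] G]]]].
move: m1 m2 m3 mY; rewrite !inE.
move=> /andP[X1H1 X1H2] /andP[X2H1 X2H2] /andP[X3H1 X3H2] /andP[YH1 YH2].
exists (X1 :|: X2 :|: X3); first by rewrite inE YH1 YH2.
have lca12 := lca_nni h1 h2 X1H2 X2H2 X3H2 YH1 YH2 agI agO.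
have lca21 := lca_nni h2 h1 X1H1 X2H1 X3H1 YH2 YH1
  (fun A h => esym (agI A h)) (fun A h => esym (agO A h)).
have inter13_in_block P' : P' = X1 :|: X2 \/ P' = X2 :|: X3 ->
    in_block X1 X2 X3 ((X1 :|: X3) :&: P').
  case=> ->; rewrite /in_block.
    by rewrite -setUIr setIC (disjoint_setI0 d23) setU0 subxx.
  by rewrite -setUIl (disjoint_setI0 d12) set0U subxx !orbT.
have grouped_other H :
    grouped H X1 X2 X3 (X1 :|: X2) \/ grouped H X1 X2 X3 (X2 :|: X3) ->
    exists2 P', grouped H X1 X2 X3 P' & in_block X1 X2 X3 ((X1 :|: X3) :&: P').
  case=> g; [exists (X1 :|: X2) | exists (X2 :|: X3)] => //.
    by apply: inter13_in_block; left.
  by apply: inter13_in_block; right.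
move=> x y.
case: G => [[g1 /grouped_other[P' g2 b]] | [g2 /grouped_other[P' g1 b]]].
  split; first exact: lca12 g1 g2 b x y.
  by apply: lca21 g2 g1 _ x y; rewrite setIC.
split; last exact: lca21 g2 g1 b x y.
by apply: lca12 g1 g2 _ x y; rewrite setIC.
Qed.

End Hierarchy.

Section Realization.
Variables (X : finType) (R : realFieldType).
Implicit Types (T : eqtree X R) (A : {set X}) (x y : X).

Lemma height_ge0 T A x : A \in topo T -> x \in A -> 0 <= height T A.
Proof.
move=> AT xA; rewrite -(height_leaf T x).
by apply: height_mono; rewrite ?sub1set //; case: (topo_hier T).
Qed.

Lemma dist_le_height T A x y : A \in topo T -> x \in A -> y \in A ->
  dist T x y <= 2 * height T A.
Proof.
move=> AT xA yA; rewrite ler_wpM2l // height_mono ?lca_min //.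
exact: lca_in (topo_hier T).
Qed.

Lemma dist_ge0 T x y : 0 <= dist T x y.
Proof.
rewrite mulr_ge0 // (@height_ge0 _ _ x) ?lca_meml //.
exact: lca_in (topo_hier T).
Qed.

Lemma eqtree_realizing H (w : X -> X -> R) : hierarchy H ->
  (forall x y, 0 <= w x y) ->
  (forall x y x' y', x' \in lca H x y -> y' \in lca H x y ->
     w x' y' <= w x y) ->
  exists T : eqtree X R, topo T = H /\ forall x y, x != y -> dist T x y = w x y.
Proof.
move=> hH w_ge0 w_mono.
pose diam A := \big[Num.max/0]_(p : X * X | [&& p.1 \in A, p.2 \in A
                                               & p.1 != p.2]) w p.1 p.2.
have diam_ge (A : {set X}) x y :
    x \in A -> y \in A -> x != y -> w x y <= diam A.
  move=> xA yA nxy.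
  by apply: (le_bigmax_cond _ (j := (x, y)) (fun p : X * X => w p.1 p.2));
    rewrite /= xA yA.
have diam_mono (A B : {set X}) : A \subset B -> diam A <= diam B.
  move=> AB; apply/bigmax_leP; split=> [|p /and3P[p1A p2A]].
    exact: bigmax_ge_id.
  by apply: diam_ge; rewrite (subsetP AB).
have diam_leaf x : diam [set x] / 2 = 0.
  rewrite /diam big_pred0 ?mul0r // => p.
  by apply/and3P => -[]; rewrite !inE => /eqP-> /eqP->; rewrite eqxx.
have diam_height (A B : {set X}) :
    A \in H -> B \in H -> A \subset B -> diam A / 2 <= diam B / 2.
  by move=> _ _ AB; rewrite ler_wpM2r ?invr_ge0 ?diam_mono.
exists (EqTree hH diam_leaf diam_height); split=> // x y nxy.
rewrite /dist /= mulrCA mulfV ?pnatr_eq0 // mulr1.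
apply: le_anti; rewrite diam_ge ?lca_meml ?lca_memr // andbT.
apply/bigmax_leP; split=> [|p /and3P[p1L p2L _]].
  exact: w_ge0.
exact: w_mono.
Qed.

Section TropicalCombination.
Variables (T T' : eqtree X R) (a b : R) (Y : {set X}).
Hypothesis YT' : Y \in topo T'.
Hypothesis dominant_at_Y : b + 2 * height T' Y <= a + 2 * height T Y.
Hypothesis lca_sub_or_Y : forall x y,
  lca (topo T) x y \subset lca (topo T') x y \/ lca (topo T) x y = Y.

Lemma max_dist_monotone x y x' y' :
  x' \in lca (topo T) x y -> y' \in lca (topo T) x y ->
  Num.max (a + dist T x' y') (b + dist T' x' y') <=
  Num.max (a + dist T x y) (b + dist T' x y).
Proof.
set L := lca (topo T) x y => x'L y'L.
have LT : L \in topo T by apply: lca_in (topo_hier T).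
have dx'y' : dist T x' y' <= dist T x y by apply: dist_le_height.
rewrite ge_max !le_max !lerD2l dx'y' /=.
have [LL' | LY] := lca_sub_or_Y x y.
  rewrite (@dist_le_height _ (lca (topo T') x y)) ?orbT ?(subsetP LL') //.
  exact: lca_in (topo_hier T').
apply/orP; left; apply: le_trans (le_trans dominant_at_Y _).
  by rewrite lerD2l dist_le_height // -LY.
by rewrite /dist LY.
Qed.

Lemma tropical_combination_tree : exists T0 : eqtree X R, topo T0 = topo T /\
  exists c, forall x y, x != y ->
    dist T0 x y = Num.max (a + dist T x y) (b + dist T' x y) + c.
Proof.
pose w x y := Num.max (a + dist T x y) (b + dist T' x y) - a.
have w_ge0 x y : 0 <= w x y by rewrite subr_ge0 le_max lerDl dist_ge0.
have w_mono x y x' y' : x' \in lca (topo T) x y -> y' \in lca (topo T) x y ->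
    w x' y' <= w x y.
  by move=> x'L y'L; rewrite lerD2r max_dist_monotone.
have [T0 [T0T dT0]] := eqtree_realizing (topo_hier T) w_ge0 w_mono.
by exists T0; split=> //; exists (- a).
Qed.

End TropicalCombination.

End Realization.

Theorem theorem6 (X : finType) (R : realFieldType) (T1 T2 : eqtree X R) :
  nni (topo T1) (topo T2) ->
  forall a b : R,
    exists T : eqtree X R,
      (topo T = topo T1 \/ topo T = topo T2) /\
      exists c : R, forall x y : X, x != y ->
        dist T x y = Num.max (a + dist T1 x y) (b + dist T2 x y) + c.
Proof.
move=> hnni a b.
have [Y /setIP[YT1 YT2] lcaY] := nni_lca (topo_hier T1) (topo_hier T2) hnni.
have [hY | hY] := leP (b + 2 * height T2 Y) (a + 2 * height T1 Y).
  have [T [T_T1 Tmax]] :=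
    tropical_combination_tree YT2 hY (fun x y => (lcaY x y).1).
  by exists T; split; [left |].
have [T [T_T2 [c Tmax]]] :=
  tropical_combination_tree YT1 (ltW hY) (fun x y => (lcaY x y).2).
exists T; split; [by right | exists c => x y nxy].
by rewrite Tmax // maxC.
Qed.
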